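(* For every positive integer $s$, $K_{3}^{RT}(3,s,3s-2)\le 5$.
   Context: For positive integers $m,s$, the RT poset $[m\times s]$ is the set $\{1,\ldots,ms\}$ partitioned into $m$ blocks $B_i=\{is+1,\ldots,(i+1)s\}$; each block is a chain under the usual order of the integers, and elements of different blocks are incomparable. An ideal is a down-closed subset; $\langle A\rangle$ denotes the smallest ideal containing $A$. For $x,y\in\mathbb{Z}_q^{ms}$, $d_{RT}(x,y)=|\langle\{i:x_i\neq y_i\}\rangle|$. A code $C\subseteq \mathbb{Z}_q^{ms}$ is an $R$-covering if every $x\in\mathbb{Z}_q^{ms}$ has some $c\in C$ with $d_{RT}(x,c)\le R$; $K_q^{RT}(m,s,R)$ is the smallest size of an $R$-covering. *)

From mathcomp Require Import all_boot.
Set Implicit Arguments. Unset Strict Implicit. Unset Printing Implicit Defensive.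

(* Positions of the RT poset [m x s] are 'I_(m*s), i.e. 0..ms-1 (0-indexed
   version of 1..ms); position k lies in block k %/ s. *)
Definition rt_le (s : nat) (j k : nat) : bool := (j %/ s == k %/ s) && (j <= k).

(* Alphabet Z_q represented by 'I_q (only equality of symbols matters). *)
Definition word (q m s : nat) := {ffun 'I_(m * s) -> 'I_q}.

Definition rt_ideal (m s : nat) (A : {set 'I_(m * s)}) : {set 'I_(m * s)} :=
  [set j : 'I_(m * s) | [exists k in A, rt_le s j k]].

Definition d_RT (q m s : nat) (x y : word q m s) : nat :=
  #|rt_ideal [set i | x i != y i]|.

Definition is_covering (q m s R : nat) (C : {set word q m s}) : bool :=
  [forall x : word q m s, [exists c in C, d_RT x c <= R]].

Definition has_covering_of_size (q m s R n : nat) : bool :=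
  [exists C : {set word q m s}, (#|C| == n) && is_covering R C].

Lemma has_covering_ex (q m s R : nat) : exists n, has_covering_of_size q m s R n.
Proof.
exists #|[set: word q m s]|; apply/existsP; exists [set: word q m s].
rewrite eqxx /=; apply/forallP => x; apply/existsP; exists x.
rewrite in_setT /= /d_RT.
have -> : [set i | x i != x i] = set0 by apply/setP => i; rewrite !inE eqxx.
have -> : rt_ideal (m:=m) (s:=s) set0 = set0.
  by apply/setP => j; rewrite !inE; apply/existsP => -[k]; rewrite inE.
by rewrite cards0.
Qed.

Definition K_RT (q m s R : nat) : nat := ex_minn (has_covering_ex q m s R).

From mathcomp Require Import all_boot zify.
From mathcomp Require Import zmodp.

Set Implicit Arguments.
Unset Strict Implicit.
Unset Printing Implicit Defensive.

(** Put the symbols of a Hamming covering code of length [m] on the top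
    elements of the [m] chains and zeros elsewhere.  The top of a chain lies
    in the ideal generated by a set of positions only if it belongs to that
    set, so a word agreeing with such a codeword on the tops of all but [r]
    chains is at RT distance at most [m * s - (m - r)] from it.  For [q = 3]
    and [m = 3] the code {000, 011, 101, 110, 222} has Hamming covering
    radius 1 and size 5. *)

Lemma rt_le_refl (s j : nat) : rt_le s j j.
Proof. by rewrite /rt_le eqxx leqnn. Qed.

Lemma mem_rt_ideal_maximal (m s : nat) (A : {set 'I_(m * s)}) (t : 'I_(m * s)) :
  (forall k : 'I_(m * s), rt_le s t k -> k = t) ->
  (t \in rt_ideal A) = (t \in A).
Proof.
move=> t_max; rewrite inE; apply/exists_inP/idP => [[k kA /t_max <-] // | tA].
by exists t; rewrite ?rt_le_refl.
Qed.

Lemma d_RT_le_agree (q m s : nat) (x c : word q m s) (T : {set 'I_(m * s)}) :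
    (forall t, t \in T -> forall k : 'I_(m * s), rt_le s t k -> k = t) ->
    {in T, forall t, x t = c t} ->
  d_RT x c <= m * s - #|T|.
Proof.
move=> T_max xc_agree.
have sub : rt_ideal [set i | x i != c i] \subset ~: T.
  apply/subsetP => t; rewrite in_setC; apply: contraL => tT.
  by rewrite mem_rt_ideal_maximal ?inE ?xc_agree ?eqxx //; apply: T_max.
apply: leq_trans (subset_leq_card sub) _.
by rewrite [#|~: T|]cardsCs setCK card_ord.
Qed.

Lemma K_RT_le_card (q m s R : nat) (C : {set word q m s}) :
  is_covering R C -> K_RT q m s R <= #|C|.
Proof.
move=> C_cov; rewrite /K_RT; case: ex_minnP => n _ n_min; apply: n_min.
by apply/existsP; exists C; rewrite eqxx.
Qed.

Lemma card_neq_le1 (T : finType) (U : eqType) (v w : T -> U) (j : T) :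
  (forall i, i != j -> v i = w i) -> #|[set i | v i != w i]| <= 1.
Proof.
move=> vw_agree; rewrite -(cards1 j); apply: subset_leq_card.
by apply/subsetP => i; rewrite !inE; apply: contraR => /vw_agree ->.
Qed.

Section TopPositions.

Variables m s : nat.
Hypothesis s_gt0 : 0 < s.

Lemma top_pos_subproof (b : 'I_m) : b * s + s.-1 < m * s.
Proof. by have := ltn_ord b; nia. Qed.

Definition top_pos (b : 'I_m) : 'I_(m * s) := Ordinal (top_pos_subproof b).

Lemma top_pos_div (b : 'I_m) : top_pos b %/ s = b.
Proof. by rewrite /= divnDl ?dvdn_mull // mulnK // divn_small ?addn0 //; lia. Qed.

Lemma top_pos_inj : injective top_pos.
Proof. by move=> b1 b2 /(congr1 (fun k => val k %/ s)); rewrite !top_pos_div => /val_inj. Qed.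

Lemma top_pos_maximal (b : 'I_m) (k : 'I_(m * s)) :
  rt_le s (top_pos b) k -> k = top_pos b.
Proof.
rewrite /rt_le top_pos_div => /andP [/eqP kb le_top_k]; apply: val_inj => /=.
by move: le_top_k; have := divn_eq k s; have := ltn_pmod k s_gt0; rewrite -kb /=; lia.
Qed.

Variables (q : nat) (a0 : 'I_q).

Definition top_word (v : {ffun 'I_m -> 'I_q}) : word q m s :=
  [ffun i => if [pick b | i == top_pos b] is Some b then v b else a0].

Lemma top_word_top (v : {ffun 'I_m -> 'I_q}) (b : 'I_m) : top_word v (top_pos b) = v b.
Proof.
rewrite ffunE; case: pickP => [b' /eqP /top_pos_inj -> // | /(_ b)].
by rewrite eqxx.
Qed.

Theorem K_RT_le_Hamming_covering (r : nat) (H : {set {ffun 'I_m -> 'I_q}}) :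
    (forall v : {ffun 'I_m -> 'I_q}, exists2 c, c \in H & #|[set i | v i != c i]| <= r) ->
  K_RT q m s (m * s - (m - r)) <= #|H|.
Proof.
move=> H_cov; apply: leq_trans (leq_imset_card top_word H).
apply: K_RT_le_card; apply/forallP => x.
have [c cH diff_le_r] := H_cov [ffun b => x (top_pos b)].
apply/exists_inP; exists (top_word c); first exact: imset_f.
set E := [set b | x (top_pos b) == c b].
apply: leq_trans (d_RT_le_agree (T := top_pos @: E) _ _) _.
- by move=> _ /imsetP [b _ ->]; apply: top_pos_maximal.
- by move=> _ /imsetP [b bE ->]; rewrite top_word_top; move: bE; rewrite inE => /eqP.
rewrite card_imset; last exact: top_pos_inj.
have card_diff : #|~: E| = #|[set i | [ffun b => x (top_pos b)] i != c i]|.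
  by apply: eq_card => b; rewrite !inE ffunE.
by rewrite leq_sub2l // leq_subLR -{1}(card_ord m) -(cardsC E) addnC leq_add2r card_diff.
Qed.

End TopPositions.

Definition ternary_triples : seq (seq nat) :=
  [:: [:: 0; 0; 0]; [:: 0; 1; 1]; [:: 1; 0; 1]; [:: 1; 1; 0]; [:: 2; 2; 2]].

Definition ternary_word (t : seq nat) : {ffun 'I_3 -> 'I_3} :=
  [ffun i : 'I_3 => inZp (nth 0 t i)].

Definition ternary_code : {set {ffun 'I_3 -> 'I_3}} := [set:: map ternary_word ternary_triples].

Lemma card_ternary_code : #|ternary_code| <= 5.
Proof. by rewrite cardsE card_size. Qed.

(* The even-weight binary words cover every word with at least two binary
   coordinates, and 222 covers the others. *)
Lemma ternary_triples_cover (a b c : nat) : a < 3 -> b < 3 -> c < 3 ->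
  has (fun t => has (fun j => all (fun i => (i == j) || (nth 0 t i == nth 0 [:: a; b; c] i))
                                  (iota 0 3)) (iota 0 3)) ternary_triples.
Proof. by case: a => [|[|[|a]]] //; case: b => [|[|[|b]]] //; case: c => [|[|[|c]]]. Qed.

Lemma nth_ord3 (T : Type) (x0 : T) (f : 'I_3 -> T) (i : 'I_3) :
  nth x0 [:: f ord0; f (inZp 1); f (inZp 2)] i = f i.
Proof. by case: i => [[|[|[|i]]] lt_i3] //=; congr f; apply: val_inj. Qed.

Lemma ternary_code_covering (v : {ffun 'I_3 -> 'I_3}) :
  exists2 c, c \in ternary_code & #|[set i | v i != c i]| <= 1.
Proof.
have /hasP [t t_in /hasP [j]] := ternary_triples_cover
  (ltn_ord (v ord0)) (ltn_ord (v (inZp 1))) (ltn_ord (v (inZp 2))).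
rewrite mem_iota add0n => /andP [_ lt_j3] /allP t_agree.
exists (ternary_word t); first by rewrite inE map_f.
apply: (@card_neq_le1 _ _ _ _ (Ordinal lt_j3)) => i ne_ij; apply: val_inj.
have := t_agree i; rewrite mem_iota ltn_ord (negbTE (ne_ij : val i != j)) => /(_ isT).
rewrite (nth_ord3 _ (fun k => val (v k))) => /eqP t_i.
by rewrite ffunE /= t_i modn_small ?ltn_ord.
Qed.

Theorem corollary4 (s : nat) : 0 < s -> K_RT 3 3 s (3 * s - 2) <= 5.
Proof.
move=> s_gt0; have -> : 3 * s - 2 = 3 * s - (3 - 1) by [].
exact: leq_trans (K_RT_le_Hamming_covering s_gt0 ord0 ternary_code_covering) card_ternary_code.
Qed.
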